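(* Let $M\ge1$ and $K\ge1$ be integers and consider the binomial family $\mathcal F=\{f(y;\theta)=\binom{M}{y}\theta^y(1-\theta)^{M-y}:\theta\in(0,1),\ y\in\{0,\dots,M\}\}$. For any integer $r\ge1$, the condition $(r+1)K-1\le M$ is necessary and sufficient for $\mathcal F$ to be strongly identifiable in the $r$-th order; that is, it is necessary and sufficient for the following property: for any $K$ distinct points $\theta_1,\dots,\theta_K\in(0,1)$ and any reals $\beta_{jl}$, $j=1,\dots,K$, $l=0,\dots,r$, if $$\sup_{y\in\{0,\dots,M\}}\Big|\sum_{j=1}^K\sum_{l=0}^r\beta_{jl}\frac{\partial^lf(y;\theta_j)}{\partial\theta^l}\Big|=0,$$ then $\beta_{jl}=0$ for all $j=1,\dots,K$ and $l=0,\dots,r$. *)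

From HB Require Import structures.
From mathcomp Require Import all_boot all_order all_algebra.
From mathcomp Require Import all_classical all_reals all_analysis.
Set Implicit Arguments. Unset Strict Implicit. Unset Printing Implicit Defensive.
Import Order.TTheory GRing.Theory Num.Theory.
Local Open Scope ring_scope.

Definition binom_f (R : realType) (M y : nat) (theta : R) : R :=
  ('C(M, y))%:R * theta ^+ y * (1 - theta) ^+ (M - y).

Definition binom_df (R : realType) (M l y : nat) (theta : R) : R :=
  derive1n l (binom_f M y) theta.

Definition strongly_identifiable (R : realType) (M K r : nat) : Prop :=
  forall theta : 'I_K -> R, injective theta ->
  (forall j, 0 < theta j < 1) ->
  forall beta : 'I_K -> 'I_r.+1 -> R,
    \big[Num.max/0]_(y < M.+1)
       `| \sum_(j < K) \sum_(l < r.+1) beta j l * binom_df M l y (theta j) | = 0 ->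
    forall j l, beta j l = 0.

From HB Require Import structures.
From mathcomp Require Import all_boot all_order all_algebra.
From mathcomp Require Import all_classical all_reals all_analysis.
From mathcomp Require Import zify.
Import Order.TTheory GRing.Theory Num.Theory.

(* Up to the factors C(M, y), the densities f(y; .) are the Bernstein
   polynomials of degree M, which span all polynomials of degree at most M.
   So the hypothesis of strong identifiability says exactly that the functional
   p |-> sum_(j,l) beta_jl p^(l)(theta_j) vanishes on polynomials of degree at
   most M.  If (r+1)K - 1 <= M, testing it on
   (X - theta_j)^l prod_(i <> j) (X - theta_i)^(r+1), for l = r down to 0,
   isolates beta_jl (Hermite interpolation).  If (r+1)K - 1 > M, the K(r+1)
   vectors (f^(l)(y; theta_j))_y of R^(M+1) are linearly dependent for any
   choice of the nodes. *)

Set Implicit Arguments. Unset Strict Implicit. Unset Printing Implicit Defensive.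
Local Open Scope ring_scope.

Section XsubCExpDerivn.
Variable R : comNzRingType.
Implicit Types (a : R) (q : {poly R}).

Lemma deriv_XsubC_expSM a n q :
  (('X - a%:P) ^+ n.+1 * q)^`() =
  ('X - a%:P) ^+ n * (q *+ n.+1 + ('X - a%:P) * q^`()).
Proof.
rewrite derivM deriv_exp derivXsubC mul1r /= mulrDr mulrnAr mulrnAl.
by rewrite mulrA -exprSr.
Qed.

Lemma horner_derivn_XsubC_expM_lt a n m q : (m < n)%N ->
  ((('X - a%:P) ^+ n * q)^`(m)).[a] = 0.
Proof.
elim: m n q => [|m IH] [|n] q // lt_mn.
  by rewrite derivn0 hornerM horner_exp hornerXsubC subrr expr0n mul0r.
by rewrite derivSn deriv_XsubC_expSM IH.
Qed.

Lemma horner_derivn_XsubC_expM a n q :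
  ((('X - a%:P) ^+ n * q)^`(n)).[a] = q.[a] *+ n`!.
Proof.
elim: n q => [|n IH] q; first by rewrite derivn0 expr0 mul1r.
rewrite derivSn deriv_XsubC_expSM IH hornerD hornerM hornerXsubC subrr.
by rewrite mul0r addr0 hornerMn -mulrnA factS.
Qed.

End XsubCExpDerivn.

Section Bernstein.
Variable R : comNzRingType.

Definition bernstein (M a : nat) : {poly R} := 'X^a * (1 - 'X) ^+ (M - a).

Lemma scalar_bernstein_eq0 (L : {scalar {poly R}}) M :
  (forall a, (a <= M)%N -> L (bernstein M a) = 0) ->
  forall p : {poly R}, (size p <= M.+1)%N -> L p = 0.
Proof.
move=> L_bernstein.
have L_Xn k : (k <= M)%N -> L 'X^k = 0.
  move=> le_kM.
  have -> : 'X^k = 'X^k * ('X + (1 - 'X)) ^+ (M - k) :> {poly R}.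
    by rewrite addrC subrK expr1n mulr1.
  rewrite exprDn mulr_sumr linear_sum big1 // => i _.
  have le_iM : (i <= M)%N by have := ltn_ord i; lia.
  rewrite mulrnAr linearMn mulrA -exprD.
  have -> : (k + (M - k - i) = M - i)%N by have := ltn_ord i; lia.
  rewrite -[X in (1 - 'X) ^+ X](subKn le_iM).
  by rewrite L_bernstein ?mul0rn ?leq_subr.
move=> p size_p.
have -> : p = \sum_(i < M.+1) p`_i *: 'X^i.
  rewrite -poly_def; apply/polyP => i; rewrite coef_poly.
  by case: ltnP => // le_Mi; rewrite nth_default // (leq_trans size_p le_Mi).
by rewrite linear_sum big1 // => i _; rewrite linearZ /= L_Xn ?mulr0 // -ltnS.
Qed.

End Bernstein.

Definition hermite_form (R : comNzRingType) (K r : nat)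
    (theta : 'I_K -> R) (beta : 'I_K -> 'I_r.+1 -> R) (p : {poly R}) : R :=
  \sum_(j < K) \sum_(l < r.+1) beta j l * (p^`(l)).[theta j].

Lemma hermite_form_is_scalar (R : comNzRingType) K r theta beta :
  scalar (@hermite_form R K r theta beta).
Proof.
move=> c p q; rewrite /hermite_form mulr_sumr -big_split; apply: eq_bigr => j _.
rewrite mulr_sumr -big_split; apply: eq_bigr => l _.
by rewrite derivnD derivnZ hornerD hornerZ mulrDr mulrCA.
Qed.

HB.instance Definition _ (R : comNzRingType) K r theta beta :=
  GRing.isLinear.Build R {poly R} R *%R (@hermite_form R K r theta beta)
    (hermite_form_is_scalar theta beta).

Section HermiteInterpolation.
Variables (R : numDomainType) (K r : nat) (theta : 'I_K -> R).
Variable beta : 'I_K -> 'I_r.+1 -> R.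
Hypothesis theta_inj : injective theta.

Definition prod_XsubC_other (j : 'I_K) : {poly R} :=
  \prod_(i < K | i != j) ('X - (theta i)%:P) ^+ r.+1.

Lemma size_prod_XsubC_other j : size (prod_XsubC_other j) = (K.-1 * r.+1).+1.
Proof.
rewrite size_prod; last by move=> i _; rewrite expf_neq0 // polyXsubC_eq0.
under eq_bigr => i _ do rewrite size_exp_XsubC.
rewrite sum_nat_const.
have -> : #|[pred i | i != j]| = K.-1.
  by have := cardC1 j; rewrite card_ord => <-; apply: eq_card.
by rewrite mulnS -addnS addKn.
Qed.

Lemma horner_prod_XsubC_other_neq0 j : (prod_XsubC_other j).[theta j] != 0.
Proof.
rewrite horner_prod; apply/prodf_neq0 => i neq_ij.
rewrite horner_exp hornerXsubC expf_neq0 // subr_eq0.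
by apply: contra neq_ij => /eqP/theta_inj ->.
Qed.

Lemma hermite_form_XsubC_expM j (l : 'I_r.+1) :
    (forall m : 'I_r.+1, (l < m)%N -> beta j m = 0) ->
  hermite_form theta beta (('X - (theta j)%:P) ^+ l * prod_XsubC_other j) =
  beta j l * (prod_XsubC_other j).[theta j] *+ l`!.
Proof.
move=> beta_gt_l; set g := _ * prod_XsubC_other j.
rewrite /hermite_form (bigD1 j) //= [X in _ + X]big1 ?addr0; last first.
  move=> i neq_ij; apply: big1 => m _.
  have -> : g = ('X - (theta i)%:P) ^+ r.+1 *
      (('X - (theta j)%:P) ^+ l * \prod_(k < K | (k != j) && (k != i))
                                     ('X - (theta k)%:P) ^+ r.+1).
    by rewrite /g /prod_XsubC_other (bigD1 i) //= mulrCA.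
  by rewrite horner_derivn_XsubC_expM_lt ?mulr0.
rewrite (bigD1 l) //= big1 ?addr0 => [|m neq_ml].
  by rewrite horner_derivn_XsubC_expM mulrnAr.
have [lt_lm|le_ml] := ltnP l m; first by rewrite beta_gt_l ?mul0r.
rewrite horner_derivn_XsubC_expM_lt ?mulr0 // ltn_neqAle le_ml andbT.
by apply: contra neq_ml => /eqP/val_inj ->.
Qed.

Lemma hermite_form_eq0 :
    (forall p : {poly R},
       (size p <= r.+1 * K)%N -> hermite_form theta beta p = 0) ->
  forall j l, beta j l = 0.
Proof.
move=> hermite0 j.
have beta_eq0 (l : 'I_r.+1) :
    (forall m : 'I_r.+1, (l < m)%N -> beta j m = 0) -> beta j l = 0.
  move=> beta_gt_l.
  set g := ('X - (theta j)%:P) ^+ l * prod_XsubC_other j.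
  have size_g : (size g <= r.+1 * K)%N.
    rewrite (leq_trans (size_polyMleq _ _)) // size_exp_XsubC.
    rewrite size_prod_XsubC_other.
    by have := ltn_ord l; have := ltn_ord j; nia.
  have /eqP := @hermite0 g size_g; rewrite hermite_form_XsubC_expM //.
  rewrite mulrn_eq0 mulf_eq0 (negbTE (horner_prod_XsubC_other_neq0 j)) orbF.
  by rewrite eqn0Ngt fact_gt0 /= => /eqP.
suff beta_top n (l : 'I_r.+1) : (r - l <= n)%N -> beta j l = 0.
  by move=> l; apply: (beta_top r); rewrite leq_subr.
elim: n l => [|n IH] l le_rl_n; apply: beta_eq0 => m lt_lm; have := ltn_ord m.
- lia.
- by move=> lt_mr; apply: IH; lia.
Qed.

End HermiteInterpolation.

Lemma exists_nontrivial_relation (F : fieldType) m n p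
    (v : 'I_m -> 'I_n -> 'rV[F]_p) :
  (p < m * n)%N ->
  exists2 B : 'M[F]_(m, n), B != 0 & \sum_i \sum_j B i j *: v i j = 0.
Proof.
move=> lt_p_mn.
pose V := \matrix_(k < m * n, y < p) mxvec (\matrix_(i, j) v i j 0 y) 0 k.
have [u u_neq0 uV] : exists2 u : 'rV_(m * n), u != 0 & u *m V = 0.
  have : kermx V != 0.
    by rewrite kermx_eq0 /row_free; have := rank_leq_col V; lia.
  by case/rowV0Pn => u /sub_kermxP uV u_neq0; exists u.
exists (vec_mx u); first by rewrite vec_mx_eq0.
apply/rowP => y; transitivity ((u *m V) 0 y); last by rewrite uV.
rewrite !mxE (reindex _ (curry_mxvec_bij _ _)) summxE /=.
under eq_bigr do rewrite summxE.
by rewrite pair_bigA; apply: eq_bigr => -[i j] _; rewrite !mxE mxvecE mxE.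
Qed.

Lemma derive1n_horner (R : realType) (p : {poly R}) n :
  derive1n n (horner p) = horner p^`(n).
Proof.
elim: n => [|n IH]; first by rewrite derivn0.
by rewrite derive1nS IH derivnS derivE.
Qed.

Lemma binom_dfE (R : realType) M l y (t : R) :
  binom_df M l y t = (('C(M, y))%:R *: bernstein R M y)^`(l).[t].
Proof.
rewrite /binom_df.
have -> : binom_f M y = horner (('C(M, y))%:R *: bernstein R M y).
  by apply: boolp.funext => x; rewrite /binom_f !hornerE.
by rewrite derive1n_horner.
Qed.

Lemma sum_binom_df (R : realType) M K r (theta : 'I_K -> R) beta y :
  \sum_(j < K) \sum_(l < r.+1) beta j l * binom_df M l y (theta j) =
  ('C(M, y))%:R * hermite_form theta beta (bernstein R M y).
Proof.
under eq_bigr do under eq_bigr do rewrite binom_dfE.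
by rewrite -/(hermite_form _ _ _) scalarZ.
Qed.

Lemma strongly_identifiable_suff (R : realType) M K r :
  (r.+1 * K - 1 <= M)%N -> strongly_identifiable R M K r.
Proof.
move=> le_rK_M theta theta_inj _ beta sup_eq0.
apply: (hermite_form_eq0 theta_inj) => p size_p.
apply: (scalar_bernstein_eq0 (M := M)) => [a le_aM|]; last first.
  by move: le_rK_M; rewrite leq_subLR add1n; apply: leq_trans.
have := le_bigmax (0 : R)
  (fun y : 'I_M.+1 => `|\sum_j \sum_l beta j l * binom_df M l y (theta j)|)
  (Ordinal (le_aM : (a < M.+1)%N)).
rewrite sup_eq0 /= sum_binom_df normr_le0 mulf_eq0 pnatr_eq0 eqn0Ngt bin_gt0.
by rewrite le_aM /= => /eqP.
Qed.

Lemma strongly_identifiable_nec (R : realType) M K r :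
  strongly_identifiable R M K r -> (r.+1 * K - 1 <= M)%N.
Proof.
move=> ident; rewrite leqNgt; apply/negP => lt_M_rK.
pose theta (j : 'I_K) : R := j.+1%:R / K.+1%:R.
have theta_inj : injective theta.
  have invK_neq0 : K.+1%:R^-1 != 0 :> R by rewrite invr_eq0 pnatr_eq0.
  by move=> i j /(mulIf invK_neq0)/eqP; rewrite eqr_nat eqSS => /eqP/val_inj.
have theta01 j : 0 < theta j < 1.
  rewrite divr_gt0 ?ltr0Sn //= ltr_pdivrMr ?ltr0Sn // mul1r ltr_nat ltnS.
  exact: ltn_ord.
pose v j (l : 'I_r.+1) := \row_(y < M.+1) binom_df M l y (theta j).
have [|B B_neq0 Bv] := exists_nontrivial_relation v; first by lia.
apply/negP: B_neq0; apply/negPn/eqP/matrixP => j l; rewrite mxE.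
apply: (ident theta theta_inj theta01).
apply: (big_ind (fun x => x = 0)) => [//|x1 x2 -> ->|y _]; first exact: maxxx.
apply/normr0P/eqP; transitivity ((\sum_i \sum_k B i k *: v i k) 0 y).
  rewrite summxE; apply: eq_bigr => i _.
  by rewrite summxE; apply: eq_bigr => k _; rewrite !mxE.
by rewrite Bv mxE.
Qed.

Theorem proposition1 (R : realType) (M K r : nat) :
  (1 <= M)%N -> (1 <= K)%N -> (1 <= r)%N ->
  ((r.+1 * K - 1 <= M)%N <-> strongly_identifiable R M K r).
Proof.
(* Neither direction needs the positivity of M, K and r. *)
move=> _ _ _; split; [exact: strongly_identifiable_suff|].
exact: strongly_identifiable_nec.
Qed.
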